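(* Let $n\ge 3$ and let $j_1,\dots,j_{n-2}$ be an enumeration (linear order) of the set $\{2,\dots,n-1\}$. For $t=1,\dots,n-2$, let $J_t$ be the maximal set of consecutive integers contained in $\{2,\dots,n-1\}\setminus\{j_1,\dots,j_{t-1}\}$ that contains $j_t$, let $ext(J_t)=\{\min J_t-1,\dots,\max J_t+1\}$, and let $T_t=\{abc\in\Lambda:\ a,c\in ext(J_t),\ a<j_t<c\}$. For $S\subseteq\{1,\dots,n-2\}$ put $T_S=\bigcup_{t\in S}T_t$. Then $\mathbf D=\{T_S: S\subseteq\{1,\dots,n-2\}\}$ consists of tilings, has exactly $2^{n-2}$ elements, is closed under $T\mapsto\Lambda\setminus T$ (i.e. is symmetric), and is a Condorcet super-domain.
   Context: Fix an integer $n\ge 3$ and write $[n]=\{1,\dots,n\}$. Let $\Lambda$ be the set of 3-element subsets of $[n]$; a triple $\{a,b,c\}$ with $a<b<c$ is written $abc$. For a 4-element subset $F=\{i<j<k<l\}$ of $[n]$, the stick of $F$ is the sequence $(ijk,\ ijl,\ ikl,\ jkl)$. A tiling (the inversion set of a rhombus tiling of the zonogon $Z(n;2)$) is a subset $T\subseteq\Lambda$ such that for every 4-element $F\subseteq[n]$, $T\cap\mathrm{stick}(F)$ is an initial segment or a final segment of the stick (empty set and whole stick allowed). For a finite set $V$ of odd cardinality and tilings $(T_v)_{v\in V}$, $sm((T_v)_{v\in V})$ is the set of triples lying in $T_v$ for more than $|V|/2$ indices $v$. A set $\mathbf D$ of tilings is a Condorcet super-domain if for every finite $V$ of odd cardinality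 and every family $(T_v)_{v\in V}$ with all $T_v\in\mathbf D$, $sm((T_v)_{v\in V})$ is a tiling. *)

From mathcomp Require Import all_boot.
Set Implicit Arguments. Unset Strict Implicit. Unset Printing Implicit Defensive.

(* The ground set [n] = {1,...,n} is represented inside 'I_n.+1 (values 0..n);
   the value 0 is never used by triples in Lambda. A triple abc (a<b<c) is the
   ordered tuple ((a,b),c). *)
Definition trip (n : nat) := ('I_n.+1 * 'I_n.+1 * 'I_n.+1)%type.

Definition Lambda (n : nat) : {set trip n} :=
  [set x : trip n | (0 < x.1.1) && (x.1.1 < x.1.2) && (x.1.2 < x.2)].

Definition mk3 n (a b c : 'I_n.+1) : trip n := (a, b, c).

Definition init_seg (b : seq bool) : Prop :=
  exists m, m <= size b /\ b = nseq m true ++ nseq (size b - m) false.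
Definition final_seg (b : seq bool) : Prop :=
  exists m, m <= size b /\ b = nseq m false ++ nseq (size b - m) true.

Definition stick n (i j k l : 'I_n.+1) : seq (trip n) :=
  [:: mk3 i j k; mk3 i j l; mk3 i k l; mk3 j k l].

Definition tiling n (T : {set trip n}) : Prop :=
  T \subset Lambda n /\
  forall i j k l : 'I_n.+1, 0 < i -> i < j -> j < k -> k < l ->
    let b := [seq x \in T | x <- stick i j k l] in
    init_seg b \/ final_seg b.

Definition sm n (V : finType) (Tv : V -> {set trip n}) : {set trip n} :=
  [set x : trip n | #|V| < 2 * #|[set v | x \in Tv v]|].

Definition condorcet_super_domain n (D : {set {set trip n}}) : Prop :=
  forall (V : finType) (Tv : V -> {set trip n}),
    odd #|V| -> (forall v, Tv v \in D) -> tiling (sm Tv).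

Section Construction.
Variables (n : nat) (s : seq nat).
(* s is the enumeration j_1, ..., j_{n-2} of {2,...,n-1};
   index t : 'I_(n-2) (0-based) stands for the paper's t+1, so j_{t+1} = nth 0 s t *)

Definition jt (t : nat) : nat := nth 0 s t.

(* remaining set {2,...,n-1} \ {j_1,...,j_{t}} (paper: minus j_1..j_{t-1}) *)
Definition remaining (t : nat) (i : nat) : bool :=
  [&& 2 <= i, i <= n - 1 & i \notin take t s].

(* maximal set of consecutive integers in remaining t containing jt t:
   all integers between k and jt t (inclusive) are in remaining t *)
Definition Jt (t : nat) : {set 'I_n.+1} :=
  [set k : 'I_n.+1 |
     all (remaining t) (iota (minn k (jt t)) (maxn k (jt t) - minn k (jt t)).+1)].

Definition ext (J : {set 'I_n.+1}) : {set 'I_n.+1} :=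
  [set k : 'I_n.+1 | [exists a in J, exists b in J, (a - 1 <= k) && (k <= b + 1)]].

Definition Tt (t : nat) : {set trip n} :=
  [set x in Lambda n | [&& x.1.1 \in ext (Jt t), x.2 \in ext (Jt t),
                          x.1.1 < jt t & jt t < x.2]].

Definition TS (S : {set 'I_(n-2)}) : {set trip n} := \bigcup_(t in S) Tt t.

Definition Dom : {set {set trip n}} := [set TS S | S : {set 'I_(n-2)}].

End Construction.

From mathcomp Require Import all_boot zify.
Set Implicit Arguments. Unset Strict Implicit. Unset Printing Implicit Defensive.

(* For a triple abc let i(abc) be the least t with a < j_t < c.  Since J_t is
   the maximal run of not yet enumerated values around j_t, abc lies in T_t
   exactly when i(abc) = t: the T_t are the fibres of i on Lambda, and D is the
   family of subsets of Lambda saturated for i.  Saturated sets are closed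
   under complement and strict majority, and they are tilings because
   i(ijl) = i(ikl) = min(i(ijk), i(jkl)).  The triple (j_t - 1) j_t (j_t + 1)
   has index t, which makes S |-> T_S injective. *)

Lemma find_predU (T : Type) (p q : pred T) (s : seq T) :
  find (predU p q) s = minn (find p s) (find q s).
Proof.
elim: s => [|x s IHs] /=; first by rewrite minnn.
by rewrite IHs; case: (p x); case: (q x); rewrite ?minnSS ?min0n ?minn0.
Qed.

Lemma find_eq_take (T : Type) (x0 : T) (p : pred T) (s : seq T) t :
  t < size s -> (find p s == t) = p (nth x0 s t) && ~~ has p (take t s).
Proof.
move=> lt_ts; have [/find_ltn|hasN] := boolP (has p (take t s)).
  by rewrite andbF => lt_ft; rewrite ltn_eqF.
have le_tf : t <= find p s.
  by move: hasN; rewrite has_take_leq ?(ltnW lt_ts) // -leqNgt.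
rewrite andbT; apply/eqP/idP => [ft|pt].
  by rewrite -ft nth_find // has_find ft.
apply/eqP; rewrite eqn_leq le_tf andbT leqNgt; apply/negP => /(before_find x0).
by rewrite pt.
Qed.

Lemma init_or_final_seg4 (a b d : bool) :
  b = a \/ b = d -> init_seg [:: a; b; b; d] \/ final_seg [:: a; b; b; d].
Proof.
by case=> ->; case: a; case: d;
  [left; exists 4 | left; exists 3 | right; exists 3 | left; exists 0
  | left; exists 4 | left; exists 1 | right; exists 1 | left; exists 0].
Qed.

Section FibreUnions.

Variables (T : finType) (L : {set T}) (m : nat) (c : T -> nat) (w : 'I_m -> T).
Hypothesis c_lt : {in L, forall x, c x < m}.
Hypotheses (w_in : forall t, w t \in L) (c_w : forall t, c (w t) = t).

Definition fibre (t : 'I_m) : {set T} := [set x in L | c x == t].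

Definition fibre_union (S : {set 'I_m}) : {set T} := \bigcup_(t in S) fibre t.

Definition fibre_unions : {set {set T}} := [set fibre_union S | S : {set 'I_m}].

Definition saturated (X : {set T}) : Prop :=
  X \subset L /\ {in L &, forall x y, c x = c y -> (x \in X) = (y \in X)}.

Lemma fibre_union_saturated S : saturated (fibre_union S).
Proof.
split.
  by apply/bigcupsP => t _; apply/subsetP => x; rewrite inE => /andP[].
move=> x y xL yL cxy.
by apply/bigcupP/bigcupP => -[t tS xt]; exists t; rewrite // !inE xL yL cxy in xt *.
Qed.

Lemma saturatedE X : saturated X -> X = fibre_union [set t | w t \in X].
Proof.
case=> XL satX; apply/setP => x.
have [xL|xNL] := boolP (x \in L); last first.
  rewrite (contraNF (subsetP XL x)) //; apply/esym/bigcupP => -[t _].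
  by rewrite inE (negbTE xNL).
have satw (t : 'I_m) : c x = t -> (w t \in X) = (x \in X).
  by move=> cx; apply: satX; rewrite ?w_in ?c_w.
apply/idP/bigcupP => [xX | [t]]; last by rewrite !inE xL => wX /eqP/satw <-.
by exists (Ordinal (c_lt xL)); rewrite inE ?satw ?xL /=.
Qed.

Lemma mem_w_fibre_union S t : (w t \in fibre_union S) = (t \in S).
Proof.
apply/bigcupP/idP => [[t' t'S]|tS]; last by exists t; rewrite // inE w_in c_w eqxx.
by rewrite inE w_in c_w => /eqP/val_inj ->.
Qed.

Lemma fibre_union_inj : injective fibre_union.
Proof.
by move=> S1 S2 eqS; apply/setP => t; rewrite -!mem_w_fibre_union eqS.
Qed.

Lemma card_fibre_unions : #|fibre_unions| = 2 ^ m.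
Proof.
rewrite card_imset; last exact: fibre_union_inj.
by rewrite -cardsT -powersetT card_powerset cardsT card_ord.
Qed.

Lemma fibre_unionsP X : reflect (saturated X) (X \in fibre_unions).
Proof.
apply: (iffP imsetP) => [[S _ ->]|satX]; first exact: fibre_union_saturated.
by exists [set t | w t \in X]; last exact: saturatedE.
Qed.

Lemma saturated_setDl X : saturated X -> saturated (L :\: X).
Proof.
case=> _ satX; split; first exact: subsetDl.
by move=> x y xL yL cxy; rewrite !inE xL yL (satX x y).
Qed.

Lemma saturated_majority (V : finType) (Tv : V -> {set T}) :
  (forall v, saturated (Tv v)) ->
  saturated [set x | #|V| < 2 * #|[set v | x \in Tv v]|].
Proof.
move=> satT; split.
  apply/subsetP => x; rewrite inE => maj.
  have /card_gt0P[v] : 0 < #|[set v | x \in Tv v]| by lia.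
  by rewrite inE; apply/subsetP; case: (satT v).
move=> x y xL yL cxy; rewrite !inE.
suff -> : [set v | x \in Tv v] = [set v | y \in Tv v] by [].
by apply/setP => v; rewrite !inE; case: (satT v) => _; apply.
Qed.

End FibreUnions.

Section EnumerationDomain.

Variables (n : nat) (s : seq nat).

Definition first_between (a c : nat) : nat := find (fun k => a < k < c) s.

Definition trip_index (x : trip n) : nat := first_between x.1.1 x.2.

Lemma first_between_split i j k l : i <= j < k -> k <= l ->
  first_between i l = first_between i k \/ first_between i l = first_between j l.
Proof.
move=> ijk kl; have -> : first_between i l = minn (first_between i k) (first_between j l).
  by rewrite /first_between -find_predU; apply: eq_find => x /=; lia.
by case: (leqP (first_between i k) (first_between j l)) => h; [left|right]; lia.
Qed.

Lemma saturated_tiling X : saturated (Lambda n) trip_index X -> tiling X.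
Proof.
case=> XL satX; split => // i j k l i0 ij jk kl; rewrite /stick /=.
have inL (a b c : 'I_n.+1) : 0 < a -> a < b -> b < c -> mk3 a b c \in Lambda n.
  by move=> a0 ab bc; rewrite inE /= a0 ab bc.
rewrite -(satX (mk3 i j l) (mk3 i k l)) ?inL //; try lia.
have ijk : i <= j < k by rewrite jk ltnW.
have [e|e] := first_between_split ijk (ltnW kl);
  apply: init_or_final_seg4; [left|right]; apply: satX => //; apply: inL; lia.
Qed.

Hypothesis s_enum : perm_eq s (iota 2 (n - 2)).

Lemma mem_s k : (k \in s) = (1 < k < n).
Proof. by rewrite (perm_mem s_enum) mem_iota; lia. Qed.

Lemma size_s : size s = n - 2.
Proof. by rewrite (perm_size s_enum) size_iota. Qed.

Lemma jt_bounds t : t < n - 2 -> 1 < jt s t < n.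
Proof. by move=> lt_t; rewrite -mem_s mem_nth ?size_s. Qed.

Lemma trip_index_lt x : x \in Lambda n -> trip_index x < n - 2.
Proof.
case: x => [[a b] c]; rewrite inE -size_s -has_find /= => /andP[/andP[a0 ab] bc].
apply/hasP; exists (nat_of_ord b); last by rewrite ab bc.
by rewrite mem_s; have := ltn_ord c; lia.
Qed.

Definition witness (t : 'I_(n - 2)) : trip n :=
  mk3 (inord (jt s t).-1) (inord (jt s t)) (inord (jt s t).+1).

Lemma witness_Lambda t : witness t \in Lambda n.
Proof. by have jt_t := jt_bounds (ltn_ord t); rewrite inE /= !inordK; lia. Qed.

Lemma trip_index_witness t : trip_index (witness t) = t.
Proof.
have jt_t := jt_bounds (ltn_ord t).
rewrite /trip_index /first_between /= !inordK; try lia.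
have -> : find (fun k => (jt s t).-1 < k < (jt s t).+1) s = index (jt s t) s.
  by apply: eq_find => k /=; lia.
by rewrite index_uniq ?size_s // (perm_uniq s_enum) iota_uniq.
Qed.

Lemma trip_index_eq (x : trip n) t : x \in Lambda n -> t < n - 2 ->
  (trip_index x == t) =
  (x.1.1 < jt s t < x.2) && all (remaining n s t) (index_iota x.1.1.+1 x.2).
Proof.
case: x => [[a b] c]; rewrite inE /= => abc lt_t.
rewrite /trip_index /first_between (find_eq_take 0) ?size_s //=; congr andb.
rewrite (eq_has (a2 := in_mem^~ (mem (index_iota a.+1 c)))); last first.
  by move=> k; rewrite mem_index_iota.
rewrite has_sym -all_predC; apply: eq_in_all => k; rewrite mem_index_iota => hk.
have lt_c := ltn_ord c; rewrite /remaining andbA (_ : (1 < k) && (k <= n - 1)) //; lia.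
Qed.

Lemma mem_ext_Jt (a c : 'I_n.+1) t : a < jt s t < c ->
  (a \in ext (Jt n s t)) && (c \in ext (Jt n s t)) =
  all (remaining n s t) (index_iota a.+1 c).
Proof.
move=> ajc; apply/andP/allP => [[]|rem].
  rewrite !inE => /existsP[a1 /andP[a1J /existsP[b1 /andP[_ /andP[a1a _]]]]].
  move=> /existsP[c1 /andP[_ /existsP[d1 /andP[d1J /andP[_ cd1]]]]] k.
  rewrite mem_index_iota => hk.
  have [le_kj|lt_jk] := leqP k (jt s t); [move: a1J | move: d1J];
    by rewrite inE => /allP; apply; rewrite mem_iota; lia.
have Jk (k : 'I_n.+1) : a < k < c -> k \in Jt n s t.
  move=> hk; rewrite inE; apply/allP => i; rewrite mem_iota => hi.
  by apply: rem; rewrite mem_index_iota; lia.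
have extJ (k j : 'I_n.+1) : j \in Jt n s t -> j - 1 <= k <= j + 1 -> k \in ext (Jt n s t).
  move=> jJ hk; rewrite inE; apply/existsP; exists j; rewrite jJ /=.
  by apply/existsP; exists j; rewrite jJ.
have lt_c := ltn_ord c.
split; [apply: (extJ _ (inord a.+1)) | apply: (extJ _ (inord c.-1))];
  try apply: Jk; rewrite inordK; lia.
Qed.

Lemma mem_Tt t x : t < n - 2 ->
  (x \in Tt n s t) = (x \in Lambda n) && (trip_index x == t).
Proof.
move=> lt_t; rewrite inE; have [xL|] //= := boolP (x \in Lambda n).
rewrite trip_index_eq //; case: x xL => [[a b] c] _ /=.
apply/and4P/andP => [[aE cE aj jc] | [/andP[aj jc]]].
  by rewrite aj jc -mem_ext_Jt ?aE ?cE ?aj.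
by rewrite -mem_ext_Jt ?aj // => /andP[].
Qed.

Lemma TS_fibre_union S : TS s S = fibre_union (Lambda n) trip_index S.
Proof. by apply: eq_bigr => t _; apply/setP => x; rewrite mem_Tt ?inE. Qed.

Lemma Dom_fibre_unions : Dom n s = fibre_unions (Lambda n) (n - 2) trip_index.
Proof. by apply: eq_imset => S; exact: TS_fibre_union. Qed.

Lemma DomP X : reflect (saturated (Lambda n) trip_index X) (X \in Dom n s).
Proof.
rewrite Dom_fibre_unions.
exact: (fibre_unionsP trip_index_lt witness_Lambda trip_index_witness).
Qed.

Lemma card_Dom : #|Dom n s| = 2 ^ (n - 2).
Proof.
by rewrite Dom_fibre_unions (card_fibre_unions witness_Lambda trip_index_witness).
Qed.

End EnumerationDomain.

Theorem theorem3 (n : nat) (s : seq nat) :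
  3 <= n -> perm_eq s (iota 2 (n - 2)) ->
  (forall T, T \in Dom n s -> tiling T) /\
  #|Dom n s| = 2 ^ (n - 2) /\
  (forall T, T \in Dom n s -> Lambda n :\: T \in Dom n s) /\
  condorcet_super_domain (Dom n s).
Proof.
move=> _ s_enum; split; [|split; [|split]].
- by move=> T /(DomP s_enum); apply: saturated_tiling.
- exact: card_Dom.
- by move=> T /(DomP s_enum) satT; apply/(DomP s_enum); apply: saturated_setDl.
- move=> V Tv _ TvD; apply: (saturated_tiling (s := s)).
  by apply: saturated_majority => v; apply/(DomP s_enum).
Qed.
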